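(* Let $\mathcal{M}=\{1,\dots,M\}$ be masters and $\mathcal{N}=\{1,\dots,N\}$ workers, $N>M$, with parameters $L_m>0$, $u_{m,n}>0$, $a_{m,n}>0$. For $k_{m,n}\in\{0,1\}$ and $l_{m,n}\ge 0$ define $$\mathbb{E}[X_m(t)]=\sum_{n=1}^N \mathbb{E}[X_{m,n}(t)],\qquad \mathbb{E}[X_{m,n}(t)]=\begin{cases}k_{m,n}l_{m,n}\left[1-e^{-\frac{u_{m,n}}{l_{m,n}}(t-a_{m,n}l_{m,n})}\right], & k_{m,n}>0,\ t\ge a_{m,n}l_{m,n},\\ 0,&\text{otherwise}.\end{cases}$$ Consider the dedicated worker-assignment problem $$\mathcal{P}2:\ \min_{\{l_{m,n},k_{m,n},t\}} t\quad\text{s.t.}\quad L_m-\mathbb{E}[X_m(t)]\le 0\ \forall m,\quad \sum_{m=1}^M k_{m,n}\le 1\ \forall n,\quad k_{m,n}\in\{0,1\},\ l_{m,n}\ge 0\ \forall m,n.$$ Let $\phi_{m,n}=\frac{1}{u_{m,n}}\left[-\mathcal{W}_{-1}(-e^{-u_{m,n}a_{m,n}-1})-1\right]$, where $\mathcal{W}_{-1}$ is the lower branch of the Lambert W function, and $v_{m,n}=\frac{u_{m,n}}{L_m(1+u_{m,n}\phi_{m,n})}$. Then $\mathcal{P}2$ is equivalent to the max-min allocation problem $$\mathcal{P}5:\ \max_{\{k_{m,n}\}}\ \min_{m\in\mathcal{M}}\sum_{n=1}^N k_{m,n}v_{m,n}\quad\text{s.t.}\quad \sum_{m=1}^M k_{m,n}\le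 1,\ k_{m,n}\in\{0,1\}\ \forall m,n,$$ in the sense that minimizing over loads for each fixed assignment, the minimum value of $t$ for the assignment $\{k_{m,n}\}$ equals $1/\min_{m}\sum_n k_{m,n}v_{m,n}$; hence an assignment is optimal for $\mathcal{P}2$ iff it is optimal for $\mathcal{P}5$, and the optimal value of $\mathcal{P}2$ is the reciprocal of that of $\mathcal{P}5$.
   Context: Each master $m$ has a matrix-vector multiplication task with $L_m$ rows, MDS-coded; worker $n$ is dedicated to at most one master ($k_{m,n}=1$ iff worker $n$ serves master $m$) and computes $l_{m,n}$ coded rows; the processing time of worker $n$ on $l$ rows for master $m$ is shifted exponential with $\mathbb{P}[T\le t]=1-e^{-\frac{u_{m,n}}{l}(t-a_{m,n}l)}$ for $t\ge a_{m,n}l$. A master receives either all $l_{m,n}$ results of worker $n$ or none by time $t$; $X_m(t)$ is the number of results master $m$ has by time $t$. *)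

From HB Require Import structures.
From mathcomp Require Import all_boot all_order all_algebra.
From mathcomp Require Import all_classical all_reals all_analysis.
Set Implicit Arguments. Unset Strict Implicit. Unset Printing Implicit Defensive.
Import Order.TTheory GRing.Theory Num.Theory.
Local Open Scope ring_scope.
Local Open Scope classical_set_scope.

Section Defs.
Variable R : realType.

(* Lower branch W_{-1} of the Lambert W function: for x in [-1/e, 0),
   the unique w <= -1 with w * e^w = x (chosen by classical choice;
   outside that domain the value is unspecified). *)
Definition LambertWm1 (x : R) : R :=
  xget 0 [set w : R | w <= -1 /\ w * expR w = x].

Variables (M N : nat).
Variables (L : 'I_M -> R) (u a : 'I_M -> 'I_N -> R).

Definition EXmn (k : 'I_M -> 'I_N -> bool) (l : 'I_M -> 'I_N -> R)
    (t : R) (m : 'I_M) (n : 'I_N) : R :=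
  if k m n && (a m n * l m n <= t) then
    (k m n)%:R * l m n * (1 - expR (- (u m n / l m n) * (t - a m n * l m n)))
  else 0.

Definition EXm k l t (m : 'I_M) : R := \sum_(n < N) EXmn k l t m n.

Definition assignment (k : 'I_M -> 'I_N -> bool) : Prop :=
  forall n : 'I_N, (\sum_(m < M) (k m n : nat) <= 1)%N.

Definition feasibleP2 k l (t : R) : Prop :=
  (forall m, L m - EXm k l t m <= 0) /\ assignment k /\
  (forall m n, 0 <= l m n).

Definition optimalP2 k l t : Prop :=
  feasibleP2 k l t /\ forall k' l' t', feasibleP2 k' l' t' -> t <= t'.

Definition phi (m : 'I_M) (n : 'I_N) : R :=
  (u m n)^-1 * (- LambertWm1 (- expR (- (u m n * a m n) - 1)) - 1).

Definition v (m : 'I_M) (n : 'I_N) : R :=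
  u m n / (L m * (1 + u m n * phi m n)).

(* objective of P5: min over masters of sum_n k_{m,n} v_{m,n}
   (computed in the extended reals, then made real; finite when 0 < M) *)
Definition objP5 (k : 'I_M -> 'I_N -> bool) : R :=
  fine (\big[Order.min/+oo%E]_(m < M) (\sum_(n < N) (k m n)%:R * v m n)%:E).

Definition optimalP5 k : Prop :=
  assignment k /\ forall k', assignment k' -> objP5 k' <= objP5 k.

End Defs.

(* The expected number of results of a worker with load l > 0 by a time
   t >= a l is l (1 - e^{u a - z}) with z = u t / l.  Let x = u phi > 0, the
   root of e^{x - u a} = 1 + x given by the lower Lambert branch.  The
   tangent-line bound e^{x - z} >= 1 + x - z turns this into the load-free
   bound t u / (1 + x) = t L v, with equality exactly at z = x, i.e. at the
   load l = t / phi.  Hence E[X_m(t)] <= t L_m sum_n k_{m,n} v_{m,n}, with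
   equality at the loads t / phi, so for a fixed assignment the least feasible
   t is the reciprocal of min_m sum_n k_{m,n} v_{m,n}: minimizing t over
   assignments is maximizing the objective of P5. *)

From HB Require Import structures.
From mathcomp Require Import all_boot all_order all_algebra.
From mathcomp Require Import all_classical all_reals all_analysis.
From mathcomp Require Import ring lra.
Set Implicit Arguments. Unset Strict Implicit. Unset Printing Implicit Defensive.
Import Order.TTheory GRing.Theory Num.Theory.
Import numFieldNormedType.Exports.
Local Open Scope ring_scope.

Section LambertRoot.
Variable R : realType.
Implicit Types b : R.

Lemma lambertWm1_exists b : 0 <= b ->
  exists w : R, w <= -1 /\ w * expR w = - expR (- b - 1).
Proof.
(* IVT for w e^w on [w0, -1]; at w0 the target is exceeded because
   3 (b + 1) <= (b + 2)^2 <= e^{2 (b + 1)}. *)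
move=> b0; set w0 := - (3 * (b + 1)).
have f_cont : continuous (fun w : R => w * expR w).
  by move=> w; exact: (@continuousM _ _ id expR w) (@continuous_expR R w).
have f_m1 : -1 * expR (-1) <= - expR (- b - 1).
  by rewrite mulN1r lerN2 ler_expR; lra.
have f_w0 : - expR (- b - 1) <= w0 * expR w0.
  have e2 : expR (- b - 1) = expR w0 * (expR (b + 1) * expR (b + 1)).
    by rewrite -!expRD; congr expR; rewrite /w0; lra.
  rewrite e2 mulNr lerN2 /w0 mulrC ler_pM2l ?expR_gt0 //.
  have := expR_ge1Dx (b + 1); nra.
have w0_le : w0 <= -1 by rewrite /w0; lra.
have f_between : Num.min (w0 * expR w0) (-1 * expR (-1)) <= - expR (- b - 1)
    <= Num.max (w0 * expR w0) (-1 * expR (-1)).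
  by rewrite ge_min f_m1 orbT le_max f_w0.
have [w w_itv fw] := IVT w0_le (continuous_subspaceT f_cont) f_between.
by exists w; move: w_itv; rewrite in_itv /= => /andP[].
Qed.

Definition lambert_root b := - LambertWm1 (- expR (- b - 1)) - 1.

Lemma lambert_root_spec b : 0 <= b ->
  0 <= lambert_root b /\ expR (lambert_root b - b) = 1 + lambert_root b.
Proof.
move=> b0; rewrite /lambert_root /LambertWm1.
set P := (X in xget 0 X); have [] : P (xget 0 P).
  by apply: xgetPex; exact: lambertWm1_exists.
move: (xget 0 P : R) => W W_le hW; split; first lra.
have -> : - W - 1 - b = (- b - 1) + - W by lra.
rewrite expRD; have -> : expR (- b - 1) = - (W * expR W) by rewrite hW opprK.
rewrite mulNr -mulrA -expRD subrr expR0 mulr1; lra.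
Qed.

Lemma expR_lambert_root b : 0 <= b -> expR (lambert_root b - b) = 1 + lambert_root b.
Proof. by case/lambert_root_spec. Qed.

Lemma lambert_root_gt0 b : 0 < b -> 0 < lambert_root b.
Proof.
move=> b0; have [x0 ex] := lambert_root_spec (ltW b0).
rewrite lt_neqAle x0 andbT; apply/eqP => x_eq0.
move: ex; rewrite -x_eq0 add0r addr0 -[1]expR0 => /expR_inj /eqP.
by rewrite oppr_eq0 (gt_eqF b0).
Qed.

End LambertRoot.

Section WorkerMean.
Variable R : realType.
Implicit Types u a l t x : R.

Definition mean_results u a l t : R :=
  if a * l <= t then l * (1 - expR (- (u / l) * (t - a * l))) else 0.

Lemma lt_of_expR_sub_eq1D b x : 0 < x -> expR (x - b) = 1 + x -> b < x.
Proof. by move=> x0 ex; rewrite -subr_gt0 -expR_gt1 ex; lra. Qed.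

Lemma mean_results_le u a l t x : 0 <= u -> 0 <= t -> 0 <= l -> 0 < x ->
  expR (x - u * a) = 1 + x -> mean_results u a l t <= t * u / (1 + x).
Proof.
move=> u0 t0 l0 x0 ex; have x1 : 0 < 1 + x by lra.
have bound_ge0 : 0 <= t * u / (1 + x) by apply: divr_ge0; [exact: mulr_ge0 | exact: ltW].
rewrite /mean_results; case: ifP => // _.
have [->|l_neq0] := eqVneq l 0; first by rewrite mul0r.
have l_gt0 : 0 < l by rewrite lt_neqAle eq_sym l_neq0.
set z := u * t / l.
have -> : - (u / l) * (t - a * l) = (x - z) - (x - u * a) by rewrite /z; field.
rewrite expRD expRN ex.
have := expR_ge1Dx (x - z); set E := expR _ => E_ge.
rewrite -subr_ge0.
have -> : t * u / (1 + x) - l * (1 - E / (1 + x)) = (l * E - l * (1 + x - z)) / (1 + x).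
  by rewrite /z; field; rewrite l_neq0 /=; lra.
apply: divr_ge0; last exact: ltW.
by rewrite subr_ge0; apply: ler_wpM2l; [exact: ltW | lra].
Qed.

Lemma mean_results_opt u a t x : 0 < u -> 0 < t -> 0 < x ->
  expR (x - u * a) = 1 + x -> mean_results u a (t * u / x) t = t * u / (1 + x).
Proof.
move=> u0 t0 x0 ex; have ua_lt := lt_of_expR_sub_eq1D x0 ex.
rewrite /mean_results ifT; last first.
  rewrite -subr_ge0 (_ : t - _ = t * (x - u * a) / x); last by field; lra.
  by rewrite divr_ge0 ?mulr_ge0 ?subr_ge0 ?ltW.
have -> : - (u / (t * u / x)) * (t - a * (t * u / x)) = - (x - u * a).
  by field; rewrite !gt_eqF.
rewrite expRN ex; field; rewrite !gt_eqF //; lra.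
Qed.

Lemma mean_results_nonpos_time u a l t : 0 < a -> 0 <= l -> t <= 0 ->
  mean_results u a l t = 0.
Proof.
move=> a0 l0 t0; rewrite /mean_results; case: leP => // al_le.
have l_le0 : l <= 0 by rewrite -(pmulr_rle0 _ a0); lra.
have -> : l = 0 by apply/le_anti; rewrite l_le0 l0.
by rewrite mul0r.
Qed.

End WorkerMean.

Lemma exists_maximizer (R : realType) (I J : finType) (P : (I -> J -> bool) -> Prop)
    (F : (I -> J -> bool) -> R) (k0 : I -> J -> bool) :
  P k0 -> exists2 k, P k & forall k', P k' -> F k' <= F k.
Proof.
move=> Pk0; pose fn (kk : {ffun I * J -> bool}) i j := kk (i, j).
have fnK k : fn [ffun p => k p.1 p.2] = k.
  by apply/funext => i; apply/funext => j; rewrite /fn ffunE.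
have P0 : `[< P (fn [ffun p => k0 p.1 p.2]) >] by rewrite fnK; apply/asboolP.
case: (@arg_maxP _ _ _ _ (fun kk => `[< P (fn kk) >]) (F \o fn) P0).
move=> kk /asboolP Pkk kk_max.
exists (fn kk) => // k' Pk'; rewrite -[k']fnK; apply: kk_max.
by rewrite fnK; apply/asboolP.
Qed.

Section Assignment.
Variables (R : realType) (M N : nat).
Variables (L : 'I_M -> R) (u a : 'I_M -> 'I_N -> R).
Hypothesis L_gt0 : forall m, 0 < L m.
Hypothesis u_gt0 : forall m n, 0 < u m n.
Hypothesis a_gt0 : forall m n, 0 < a m n.
Hypothesis M_gt0 : (0 < M)%N.
Hypothesis M_le_N : (M <= N)%N.

Let xi m n := lambert_root (u m n * a m n).

Lemma xi_gt0 m n : 0 < xi m n.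
Proof. exact/lambert_root_gt0/mulr_gt0. Qed.

Lemma expR_xi m n : expR (xi m n - u m n * a m n) = 1 + xi m n.
Proof. exact/expR_lambert_root/ltW/mulr_gt0. Qed.

Lemma mulr_u_phi m n : u m n * phi u a m n = xi m n.
Proof. by rewrite /phi mulrA mulfV ?mul1r // gt_eqF. Qed.

Lemma phi_gt0 m n : 0 < phi u a m n.
Proof. by rewrite -(pmulr_rgt0 _ (u_gt0 m n)) mulr_u_phi xi_gt0. Qed.

Lemma mulr_L_v m n : L m * v L u a m n = u m n / (1 + xi m n).
Proof.
have := xi_gt0 m n; rewrite /v mulr_u_phi => xi0.
by field; rewrite (gt_eqF (L_gt0 m)) /=; lra.
Qed.

Lemma v_gt0 m n : 0 < v L u a m n.
Proof.
rewrite -(pmulr_rgt0 _ (L_gt0 m)) mulr_L_v divr_gt0 //.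
by have := xi_gt0 m n; lra.
Qed.

Definition master_rate (k : 'I_M -> 'I_N -> bool) m :=
  \sum_(n < N) (k m n)%:R * v L u a m n.

Lemma objP5_min k : exists m,
  objP5 L u a k = master_rate k m /\ forall m', master_rate k m <= master_rate k m'.
Proof.
case: (@arg_minP _ _ _ (Ordinal M_gt0) xpredT (master_rate k)) => // m _ m_min.
exists m; split => [|m']; last exact: m_min.
rewrite /objP5 (_ : \big[_/_]_(m' < M) _ = (master_rate k m)%:E) //.
by apply/le_anti; rewrite bigmin_le //= le_bigmin ?leey.
Qed.

Lemma EXmnE k l t m n :
  EXmn u a k l t m n = (k m n)%:R * mean_results (u m n) (a m n) (l m n) t.
Proof. by rewrite /EXmn /mean_results; case: (k m n); rewrite ?mul1r ?mul0r. Qed.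

Lemma EXm_le k l t m : 0 <= t -> (forall n, 0 <= l m n) ->
  EXm u a k l t m <= t * L m * master_rate k m.
Proof.
move=> t0 l0; rewrite /EXm /master_rate mulr_sumr; apply: ler_sum => n _.
rewrite EXmnE (_ : t * L m * _ = (k m n)%:R * (t * (L m * v L u a m n))); last by ring.
rewrite mulr_L_v; apply: ler_wpM2l; first exact: ler0n.
rewrite mulrA.
exact: mean_results_le (ltW (u_gt0 m n)) t0 (l0 n) (xi_gt0 m n) (expR_xi m n).
Qed.

Definition opt_load t m n := t / phi u a m n.

Lemma EXm_opt_load k t m : 0 < t ->
  EXm u a k (opt_load t) t m = t * L m * master_rate k m.
Proof.
move=> t0; rewrite /EXm /master_rate mulr_sumr; apply: eq_bigr => n _; rewrite EXmnE.
have -> : opt_load t m n = t * u m n / xi m n.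
  by rewrite /opt_load -mulr_u_phi; field; rewrite !gt_eqF ?phi_gt0.
rewrite mean_results_opt ?xi_gt0 ?expR_xi //.
by rewrite -mulrA -mulr_L_v; ring.
Qed.

Lemma EXm_nonpos_time k l t m : t <= 0 -> (forall n, 0 <= l m n) -> EXm u a k l t m = 0.
Proof.
move=> t0 l0; apply: big1 => n _.
by rewrite EXmnE mean_results_nonpos_time ?mulr0.
Qed.

Lemma feasibleP2_objP5 k l t : feasibleP2 L u a k l t ->
  0 < objP5 L u a k /\ (objP5 L u a k)^-1 <= t.
Proof.
move=> [covered [_ l0]]; pose m0 := Ordinal M_gt0.
have t_gt0 : 0 < t.
  rewrite ltNge; apply/negP => t_le0; have := covered m0.
  by rewrite EXm_nonpos_time // subr0 lt_geF ?L_gt0.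
have [m [-> _]] := objP5_min k.
have rate_ge : 1 <= t * master_rate k m.
  have := covered m; have := EXm_le k (ltW t_gt0) (l0 m); have := L_gt0 m; nra.
have rate_gt0 : 0 < master_rate k m by nra.
by split => //; rewrite -div1r ler_pdivrMr.
Qed.

Lemma feasibleP2_opt_load k : assignment k -> 0 < objP5 L u a k ->
  feasibleP2 L u a k (opt_load (objP5 L u a k)^-1) (objP5 L u a k)^-1.
Proof.
have [m [-> m_min]] := objP5_min k => k_asg rate_gt0.
split; [move=> m' | split => // m' n].
  rewrite EXm_opt_load ?invr_gt0 // subr_le0.
  rewrite mulrAC ler_peMl ?(ltW (L_gt0 m')) // mulrC ler_pdivlMr // mul1r.
  exact: m_min.
by rewrite /opt_load divr_ge0 ?invr_ge0 ?ltW ?phi_gt0.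
Qed.

Lemma optimalP2_optimalP5 k l t : optimalP2 L u a k l t -> optimalP5 L u a k.
Proof.
move=> [kt_feas kt_min]; have [obj_gt0 obj_le] := feasibleP2_objP5 kt_feas.
split => [|k' k'_asg]; first exact: kt_feas.2.1.
have [k'_le0|k'_gt0] := lerP (objP5 L u a k') 0.
  exact: le_trans k'_le0 (ltW obj_gt0).
rewrite -lef_pV2 ?posrE //; apply: le_trans obj_le _.
exact: kt_min (feasibleP2_opt_load k'_asg k'_gt0).
Qed.

Definition diag_assignment (m : 'I_M) (n : 'I_N) := val m == val n.

Lemma assignment_diag : assignment diag_assignment.
Proof.
move=> n; rewrite /diag_assignment; case: (ltnP n M) => [n_lt|n_ge].
  rewrite (bigD1 (Ordinal n_lt)) //= eqxx big1 // => m m_neq.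
  by case: eqP => // m_n; case/eqP: m_neq; apply: val_inj.
rewrite big1 // => m _; case: eqP => // m_n.
by move: (ltn_ord m); rewrite m_n ltnNge n_ge.
Qed.

Lemma objP5_diag_gt0 : 0 < objP5 L u a diag_assignment.
Proof.
have [m [-> _]] := objP5_min diag_assignment.
rewrite /master_rate (bigD1 (widen_ord M_le_N m)) //= /diag_assignment eqxx mul1r.
apply: ltr_pwDl; first exact: v_gt0.
by apply: sumr_ge0 => n _; rewrite mulr_ge0 ?ler0n ?ltW ?v_gt0.
Qed.

Lemma exists_optimalP5 : exists k, optimalP5 L u a k.
Proof.
have [k k_asg k_max] := exists_maximizer (objP5 L u a) assignment_diag.
by exists k.
Qed.

Lemma optimalP5_optimalP2 k : optimalP5 L u a k ->
  optimalP2 L u a k (opt_load (objP5 L u a k)^-1) (objP5 L u a k)^-1.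
Proof.
move=> [k_asg k_max].
have obj_gt0 : 0 < objP5 L u a k := lt_le_trans objP5_diag_gt0 (k_max _ assignment_diag).
split => [|k' l' t' k't'_feas]; first exact: feasibleP2_opt_load.
have [obj'_gt0 obj'_le] := feasibleP2_objP5 k't'_feas.
apply: le_trans obj'_le; rewrite lef_pV2 ?posrE //.
exact/k_max/k't'_feas.2.1.
Qed.

Lemma optimalP2_objP5 k l t : optimalP2 L u a k l t -> t = (objP5 L u a k)^-1.
Proof.
move=> [kt_feas kt_min]; have [obj_gt0 obj_le] := feasibleP2_objP5 kt_feas.
apply/le_anti; rewrite obj_le andbT.
exact/kt_min/feasibleP2_opt_load/obj_gt0/kt_feas.2.1.
Qed.

Lemma optimalP5_objP5 k k' : optimalP5 L u a k -> optimalP5 L u a k' ->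
  objP5 L u a k = objP5 L u a k'.
Proof. by move=> [k_asg k_max] [k'_asg k'_max]; apply/le_anti; rewrite k_max ?k'_max. Qed.

End Assignment.

Theorem proposition1 (R : realType) (M N : nat)
  (L : 'I_M -> R) (u a : 'I_M -> 'I_N -> R)
  (hM : (0 < M)%N) (hNM : (M < N)%N)
  (hL : forall m, 0 < L m)
  (hu : forall m n, 0 < u m n) (ha : forall m n, 0 < a m n) :
  (* for each fixed assignment, the minimal t over loads is 1 / objP5 k *)
  (forall k, assignment k ->
     (forall l t, feasibleP2 L u a k l t ->
        0 < objP5 L u a k /\ (objP5 L u a k)^-1 <= t) /\
     (0 < objP5 L u a k -> exists l, feasibleP2 L u a k l (objP5 L u a k)^-1)) /\
  (* an assignment is optimal for P2 iff it is optimal for P5 *)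
  (forall k, (exists l t, optimalP2 L u a k l t) <-> optimalP5 L u a k) /\
  (* optimal values are reciprocal *)
  (exists k l t, optimalP2 L u a k l t) /\
  (forall k l t k', optimalP2 L u a k l t -> optimalP5 L u a k' ->
     t = (objP5 L u a k')^-1).
Proof.
have hMN := ltnW hNM.
split=> [k k_asg|]; first split=> [l t|obj_gt0].
- exact: feasibleP2_objP5.
- by eexists; exact: feasibleP2_opt_load.
split=> [k|]; first split=> [[l [t kt_opt]]|k_opt].
- exact: optimalP2_optimalP5 kt_opt.
- by do 2 eexists; exact: optimalP5_optimalP2.
split=> [|k l t k' kt_opt k'_opt].
- have [k k_opt] := exists_optimalP5 L u a.
  by do 3 eexists; exact: optimalP5_optimalP2 k_opt.
rewrite (optimalP2_objP5 hL hu ha hM kt_opt); congr (_^-1).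
exact: optimalP5_objP5 (optimalP2_optimalP5 hL hu ha hM kt_opt) k'_opt.
Qed.
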